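(* Let $\gamma\in V$ be an element of finite order. Then $\gamma$ admits a non-empty open weakly $\gamma$-wandering subset of $S^1$. If moreover $\gamma\in T$, then $\gamma$ admits a non-empty open $\gamma$-wandering subset of $S^1$ (in fact, in that case any weakly $\gamma$-wandering set is $\gamma$-wandering).
   Context: $S^1$ is the interval $[0,1]$ with $0$ and $1$ identified. Thompson's group $T$ is the group of piecewise linear orientation-preserving homeomorphisms of $S^1$ which preserve the set of finite dyadic fractions, have finitely many breakpoints, all at finite dyadic fractions, and all slopes integer powers of $2$. Thompson's group $V$ is the group of left-continuous bijections of $S^1$ which map finite dyadic fractions to finite dyadic fractions, are differentiable except at finitely many finite dyadic fractions, and on each maximal interval of differentiability are linear with slope an integer power of $2$; $T\le V$. For $\gamma\in V$, a subset $U\subseteq S^1$ is $\gamma$-wandering if for every $n\in\mathbb{Z}$ with $\gamma^n\neq e$ we have $\gamma^n(U)\cap U=\emptyset$; $U$ is weakly $\gamma$-wandering if for every $n\in\mathbb{Z}$, either $\gamma^n$ fixes $U$ pointwise or $\gamma^n(U)\cap U=\emptyset$. *)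

From Stdlib Require Import Reals ZArith.
Open Scope R_scope.

(* S^1 = [0,1) with 0 and 1 identified: points are represented by reals in [0,1). *)
Definition S1 (x : R) : Prop := 0 <= x < 1.

(* representative of a circle point in (0,1] (0 is represented by 1),
   used to describe left-continuous pieces on half-open intervals (a,b]. *)
Definition rep1 (x : R) : R := if Req_EM_T x 0 then 1 else x.

Definition modone (x : R) : R := frac_part x.

Definition dyadic (x : R) : Prop := exists (k : Z) (n : nat), x = IZR k / 2 ^ n.

Definition cdist (x y : R) : R := Rmin (Rabs (x - y)) (1 - Rabs (x - y)).

Definition open_S1 (U : R -> Prop) : Prop :=
  (forall x, U x -> S1 x) /\
  (forall x, U x -> exists eps, 0 < eps /\ forall y, S1 y -> cdist x y < eps -> U y).

Definition circ_cont (g : R -> R) : Prop :=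
  forall x, S1 x -> forall eps, 0 < eps -> exists delta, 0 < delta /\
    forall y, S1 y -> cdist x y < delta -> cdist (g x) (g y) < eps.

Definition bij_S1 (g : R -> R) : Prop :=
  (forall x, S1 x -> S1 (g x)) /\
  (forall x y, S1 x -> S1 y -> g x = g y -> x = y) /\
  (forall y, S1 y -> exists x, S1 x /\ g x = y).

Definition is_inv_S1 (g h : R -> R) : Prop :=
  forall x, S1 x -> S1 (g x) /\ S1 (h x) /\ g (h x) = x /\ h (g x) = x.

(* Thompson's group V: left-continuous bijections of S^1 preserving dyadics,
   linear with slope a power of 2 (as maps into the circle) on each piece
   (a_i, a_{i+1}] of a finite dyadic subdivision 0 = a_0 < ... < a_n = 1. *)
Definition in_V (g : R -> R) : Prop :=
  bij_S1 g /\
  (forall x, S1 x -> dyadic x -> dyadic (g x)) /\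
  exists (n : nat) (a : nat -> R),
    a 0%nat = 0 /\ a n = 1 /\
    (forall i, (i <= n)%nat -> dyadic (a i)) /\
    (forall i, (i < n)%nat -> a i < a (S i)) /\
    (forall i, (i < n)%nat -> exists (k : Z) (c : R),
        forall x, S1 x -> a i < rep1 x <= a (S i) ->
          g x = modone (powerRZ 2 k * rep1 x + c)).

Definition cyc (a b c : R) : Prop := (a < b < c) \/ (b < c < a) \/ (c < a < b).

Definition orient_pres (g : R -> R) : Prop :=
  forall x y z, S1 x -> S1 y -> S1 z -> x < y < z -> cyc (g x) (g y) (g z).

Definition in_T (g : R -> R) : Prop :=
  in_V g /\ circ_cont g /\
  (exists h, is_inv_S1 g h /\ circ_cont h) /\ orient_pres g.

Definition gpow (g h : R -> R) (n : Z) : R -> R :=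
  match n with
  | Z0 => fun x => x
  | Zpos p => fun x => Nat.iter (Pos.to_nat p) g x
  | Zneg p => fun x => Nat.iter (Pos.to_nat p) h x
  end.

Definition is_id_S1 (f : R -> R) : Prop := forall x, S1 x -> f x = x.

Definition finite_order (g : R -> R) : Prop :=
  exists m : nat, (0 < m)%nat /\ is_id_S1 (Nat.iter m g).

Definition disjoint_image (f : R -> R) (U : R -> Prop) : Prop :=
  forall x, U x -> ~ U (f x).

Definition wandering (g h : R -> R) (U : R -> Prop) : Prop :=
  forall n : Z, ~ is_id_S1 (gpow g h n) -> disjoint_image (gpow g h n) U.

Definition weakly_wandering (g h : R -> R) (U : R -> Prop) : Prop :=
  forall n : Z, (forall x, U x -> gpow g h n x = x) \/ disjoint_image (gpow g h n) U.

(* Modulo its order m, every power of g equals some g^j with j < m.  On some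
   small interval all of g^0, ..., g^m are affine with positive slope, and an
   affine map on an interval is either the identity on a subinterval or moves
   a subinterval off itself; shrinking the interval once for each j < m yields
   a weakly wandering interval.  For g in T, a finite-order orientation-
   preserving bijection of the circle with a fixed point x is the identity: a
   point y with g y <> y would be pushed strictly monotonically around the
   circle as seen from x, and could never return. *)

From Stdlib Require Import Reals Lra Lia Psatz.
Open Scope R_scope.

Lemma iter_mul {A : Type} (f : A -> A) a b x :
  Nat.iter a (Nat.iter b f) x = Nat.iter (a * b) f x.
Proof.
  induction a as [|a IH]; simpl; [reflexivity|].
  rewrite IH, <- Nat.iter_add; reflexivity.
Qed.

Lemma is_inv_S1_S1 g h : is_inv_S1 g h -> forall x, S1 x -> S1 (g x).
Proof. intros Hinv x Hx; apply (Hinv x Hx). Qed.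

Section FiniteOrder.

Variables (g : R -> R) (m : nat).
Hypothesis g_S1 : forall x, S1 x -> S1 (g x).
Hypothesis m_pos : (0 < m)%nat.
Hypothesis g_order : is_id_S1 (Nat.iter m g).

Lemma iter_S1 k x : S1 x -> S1 (Nat.iter k g x).
Proof. apply Nat.iter_invariant, g_S1. Qed.

Lemma iter_mul_order q x : S1 x -> Nat.iter (q * m) g x = x.
Proof.
  intros Hx; rewrite <- iter_mul.
  induction q as [|q IH]; simpl; [reflexivity|].
  rewrite IH; apply g_order, Hx.
Qed.

Lemma iter_mod_order j x : S1 x -> Nat.iter j g x = Nat.iter (j mod m) g x.
Proof.
  intros Hx.
  transitivity (Nat.iter (m * (j / m) + j mod m) g x);
    [f_equal; apply Nat.div_mod_eq|].
  rewrite Nat.iter_add, Nat.mul_comm, iter_mul_order; [reflexivity|].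
  apply iter_S1, Hx.
Qed.

Lemma iter_pred_order x : S1 x -> Nat.iter (m - 1) g (g x) = x.
Proof.
  intros Hx; rewrite <- Nat.iter_succ_r.
  replace (S (m - 1)) with m by lia; apply g_order, Hx.
Qed.

Lemma inverse_iter_order h : is_inv_S1 g h ->
  forall x, S1 x -> h x = Nat.iter (m - 1) g x.
Proof.
  intros Hinv x Hx.
  assert (Hgy : g (Nat.iter (m - 1) g x) = x).
  { rewrite <- Nat.iter_succ. replace (S (m - 1)) with m by lia.
    apply g_order, Hx. }
  rewrite <- Hgy at 1.
  destruct (Hinv _ (iter_S1 (m - 1) x Hx)) as (_ & _ & _ & E); exact E.
Qed.

Lemma gpow_iter_order h : is_inv_S1 g h ->
  forall n, exists j, (j < m)%nat /\ forall x, S1 x -> gpow g h n x = Nat.iter j g x.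
Proof.
  intros Hinv.
  assert (Hh : forall p x, S1 x -> Nat.iter p h x = Nat.iter (p * (m - 1)) g x).
  { induction p as [|p IH]; intros x Hx; simpl; [reflexivity|].
    rewrite IH, (inverse_iter_order h Hinv), <- Nat.iter_add by (auto; apply iter_S1, Hx).
    reflexivity. }
  assert (Hlt : forall j, (j mod m < m)%nat) by (intros; apply Nat.mod_upper_bound; lia).
  intros [|p|p].
  - exists 0%nat; split; [lia | reflexivity].
  - exists (Pos.to_nat p mod m)%nat; split; [apply Hlt|].
    intros x Hx; apply iter_mod_order, Hx.
  - exists (Pos.to_nat p * (m - 1) mod m)%nat; split; [apply Hlt|].
    intros x Hx; simpl; rewrite Hh by exact Hx; apply iter_mod_order, Hx.
Qed.

Lemma iter_iter_order j : is_id_S1 (Nat.iter m (Nat.iter j g)).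
Proof. intros x Hx; rewrite iter_mul, Nat.mul_comm; apply iter_mul_order, Hx. Qed.

End FiniteOrder.

Definition affine_on (f : R -> R) (l r : R) : Prop :=
  exists s t, forall x, l < x < r -> f x = s * x + t.

Definition affine_piece (f : R -> R) (l r : R) : Prop :=
  exists s t, 0 < s /\ 0 <= s * l + t /\ s * r + t <= 1 /\
    forall x, l < x < r -> f x = s * x + t.

Lemma affine_piece_on f l r : affine_piece f l r -> affine_on f l r.
Proof. intros (s & t & _ & _ & _ & Hf); exists s, t; exact Hf. Qed.

Lemma affine_piece_id l r : 0 <= l -> r <= 1 -> affine_piece (fun x => x) l r.
Proof. intros Hl Hr; exists 1, 0; repeat split; intros; lra. Qed.

Lemma affine_piece_sub f l r l' r' : l <= l' -> r' <= r ->
  affine_piece f l r -> affine_piece f l' r'.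
Proof.
  intros Hl Hr (s & t & Hs & Hsl & Hsr & Hf).
  exists s, t; repeat split; [lra | nra | nra |].
  intros x Hx; apply Hf; lra.
Qed.

Lemma affine_piece_ext f f' l r : (forall x, l < x < r -> f x = f' x) ->
  affine_piece f' l r -> affine_piece f l r.
Proof.
  intros E (s & t & Hs & Hsl & Hsr & Hf).
  exists s, t; repeat split; auto.
  intros x Hx; rewrite E, Hf; auto.
Qed.

Lemma modone_affine_piece s c l r : 0 < s -> l < r ->
  exists r', l < r' <= r /\ affine_piece (fun x => modone (s * x + c)) l r'.
Proof.
  intros Hs Hlr.
  set (z := Int_part (s * l + c)).
  destruct (base_Int_part (s * l + c)) as [Hz1 Hz2]; fold z in Hz1, Hz2.
  set (w := (IZR z + 1 - c) / s).
  assert (Hw : s * w = IZR z + 1 - c) by (unfold w; field; lra).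
  assert (Hlw : l < w) by nra.
  exists (Rmin r w).
  pose proof (Rmin_l r w); pose proof (Rmin_r r w).
  split; [split; [apply Rmin_glb_lt|]; lra|].
  exists s, (c - IZR z); repeat split; [lra | lra | nra |].
  intros x Hx.
  assert (Hfrac : 0 <= s * x + (c - IZR z) < 1) by nra.
  symmetry; apply (Int_part_frac_part_spec (s * x + c) z); [exact Hfrac | ring].
Qed.

Lemma subdivision_piece (a : nat -> R) n p : a 0%nat < p -> p <= a n ->
  exists i, (i < n)%nat /\ a i < p <= a (S i).
Proof.
  induction n as [|n IH]; intros H0 Hn; [lra|].
  destruct (Rlt_le_dec (a n) p) as [Hlt|Hle].
  - exists n; split; [lia | lra].
  - destruct (IH H0 Hle) as (i & Hi & Hai); exists i; split; [lia | exact Hai].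
Qed.

Lemma in_V_affine_piece g l r : in_V g -> 0 <= l -> l < r -> r <= 1 ->
  exists l' r', l <= l' /\ l' < r' /\ r' <= r /\ affine_piece g l' r'.
Proof.
  intros (_ & _ & n & a & Ha0 & Han & _ & _ & Hpiece) Hl Hlr Hr.
  set (p := (l + r) / 2).
  destruct (subdivision_piece a n p) as (i & Hi & Hai);
    [rewrite Ha0; unfold p; lra | rewrite Han; unfold p; lra |].
  destruct (Hpiece i Hi) as (k & c & Hg).
  pose proof (Rmax_l (a i) l); pose proof (Rmax_r (a i) l).
  set (L := Rmax (a i) l) in *.
  assert (HLp : L < p) by (unfold L; apply Rmax_lub_lt; unfold p in *; lra).
  destruct (modone_affine_piece (powerRZ 2 k) c L p) as (r' & Hr' & Haff);
    [apply powerRZ_lt; lra | exact HLp |].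
  exists L, r'; repeat split; [lra | lra | unfold p in *; lra |].
  refine (affine_piece_ext _ _ _ _ _ Haff); intros x Hx.
  assert (Hrep : rep1 x = x) by (unfold rep1; destruct (Req_EM_T x 0); lra).
  rewrite Hg, Hrep; [reflexivity | unfold S1, p in *; lra | rewrite Hrep; lra].
Qed.

Lemma in_V_affine_piece_comp g f l r : in_V g -> affine_piece f l r -> l < r ->
  exists l' r', l <= l' /\ l' < r' /\ r' <= r /\ affine_piece (fun x => g (f x)) l' r'.
Proof.
  intros Hg (s & t & Hs & Hsl & Hsr & Hf) Hlr.
  destruct (in_V_affine_piece g (s * l + t) (s * r + t) Hg)
    as (l2 & r2 & H1 & H2 & H3 & s' & t' & Hs' & Hsl' & Hsr' & Hg'); [lra | nra | lra |].
  set (l' := (l2 - t) / s); set (r' := (r2 - t) / s).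
  assert (El : s * l' + t = l2) by (unfold l'; field; lra).
  assert (Er : s * r' + t = r2) by (unfold r'; field; lra).
  exists l', r'; repeat split; [nra | nra | nra |].
  exists (s' * s), (s' * t + t'); repeat split; [nra | nra | nra |].
  intros x Hx.
  rewrite Hf, Hg'; [ring | nra | nra].
Qed.

Lemma in_V_iter_affine_pieces g M l r : in_V g -> 0 <= l -> l < r -> r <= 1 ->
  exists l' r', l <= l' /\ l' < r' /\ r' <= r /\
    forall j, (j <= M)%nat -> affine_piece (Nat.iter j g) l' r'.
Proof.
  intros Hg Hl Hlr Hr.
  induction M as [|M IH].
  - exists l, r; repeat split; [lra | lra | lra |].
    intros j Hj; replace j with 0%nat by lia; apply affine_piece_id; assumption.
  - destruct IH as (l1 & r1 & H1 & H2 & H3 & Hpieces).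
    destruct (in_V_affine_piece_comp g (Nat.iter M g) l1 r1 Hg (Hpieces M (le_n M)) H2)
      as (l2 & r2 & G1 & G2 & G3 & Hnext).
    exists l2, r2; repeat split; [lra | lra | lra |].
    intros j Hj; destruct (Nat.eq_dec j (S M)) as [->|Hne]; [exact Hnext|].
    apply (affine_piece_sub _ l1 r1); [lra | lra | apply Hpieces; lia].
Qed.

Definition fixes_or_displaces (f : R -> R) (l r : R) : Prop :=
  (forall x, l < x < r -> f x = x) \/ (forall x, l < x < r -> ~ (l < f x < r)).

Lemma fixes_or_displaces_sub f l r l' r' : l <= l' -> r' <= r ->
  fixes_or_displaces f l r -> fixes_or_displaces f l' r'.
Proof.
  intros Hl Hr [Hfix|Hdisp]; [left | right]; intros x Hx.
  - apply Hfix; lra.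
  - intros Hfx; apply (Hdisp x); lra.
Qed.

Lemma affine_displaces_near f l r s t m : l < m < r ->
  (forall x, l < x < r -> f x = s * x + t) -> s * m + t <> m ->
  exists l' r', l <= l' /\ l' < r' /\ r' <= r /\
    forall x, l' < x < r' -> ~ (l' < f x < r').
Proof.
  intros Hm Hf Hne.
  set (D := Rabs (s * m + t - m)).
  set (K := 2 + Rabs (1 - s)).
  assert (HD : 0 < D) by (apply Rabs_pos_lt; lra).
  assert (HK : 0 < K) by (pose proof (Rabs_pos (1 - s)); unfold K; lra).
  pose proof (Rmin_l (m - l) (r - m)); pose proof (Rmin_r (m - l) (r - m)).
  pose proof (Rmin_l (Rmin (m - l) (r - m)) (D / K)).
  pose proof (Rmin_r (Rmin (m - l) (r - m)) (D / K)).
  set (e := Rmin (Rmin (m - l) (r - m)) (D / K)) in *.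
  assert (He : 0 < e).
  { apply Rmin_glb_lt; [apply Rmin_glb_lt; lra | apply Rdiv_lt_0_compat; lra]. }
  assert (HeK : e * K <= D).
  { replace D with (D / K * K) by (field; lra). apply Rmult_le_compat_r; lra. }
  exists (m - e), (m + e); repeat split; [lra | lra | lra |].
  intros x Hx Hfx.
  (* s m + t - m = (f x - x) + (1 - s) (x - m), and both summands are small *)
  assert (Hmove : Rabs (f x - x) < 2 * e) by (apply Rabs_def1; lra).
  assert (Hslope : Rabs ((1 - s) * (x - m)) <= Rabs (1 - s) * e).
  { rewrite Rabs_mult; apply Rmult_le_compat_l; [apply Rabs_pos|].
    apply Rabs_le; lra. }
  assert (Htri : D <= Rabs (f x - x) + Rabs ((1 - s) * (x - m))).
  { unfold D; replace (s * m + t - m) with ((f x - x) + (1 - s) * (x - m))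
      by (rewrite Hf by lra; ring).
    apply Rabs_triang. }
  unfold K in HeK; lra.
Qed.

Lemma affine_fixes_or_displaces f l r : l < r -> affine_on f l r ->
  exists l' r', l <= l' /\ l' < r' /\ r' <= r /\ fixes_or_displaces f l' r'.
Proof.
  intros Hlr (s & t & Hf).
  set (m1 := l + (r - l) / 3); set (m2 := l + 2 * (r - l) / 3).
  assert (H1 : l < m1 < r) by (unfold m1; lra).
  assert (H2 : l < m2 < r) by (unfold m2; lra).
  destruct (Req_EM_T (s * m1 + t) m1) as [E1|N1];
    [destruct (Req_EM_T (s * m2 + t) m2) as [E2|N2]|].
  - assert (Hs : s = 1).
    { assert (Z : (s - 1) * (m2 - m1) = 0) by lra.
      apply Rmult_integral in Z; unfold m1, m2 in *; destruct Z; lra. }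
    subst s; assert (Ht : t = 0) by lra; subst t.
    exists l, r; repeat split; [lra | lra | lra |].
    left; intros x Hx; rewrite Hf by exact Hx; ring.
  - destruct (affine_displaces_near f l r s t m2 H2 Hf N2) as (l' & r' & ? & ? & ? & Hd).
    exists l', r'; repeat split; try assumption; right; exact Hd.
  - destruct (affine_displaces_near f l r s t m1 H1 Hf N1) as (l' & r' & ? & ? & ? & Hd).
    exists l', r'; repeat split; try assumption; right; exact Hd.
Qed.

Lemma affine_family_fixes_or_displaces (F : nat -> R -> R) J l r : l < r ->
  (forall j, (j < J)%nat -> affine_on (F j) l r) ->
  exists l' r', l <= l' /\ l' < r' /\ r' <= r /\
    forall j, (j < J)%nat -> fixes_or_displaces (F j) l' r'.
Proof.
  intros Hlr Haff; induction J as [|J IH].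
  - exists l, r; repeat split; [lra | lra | lra | intros; lia].
  - destruct IH as (l1 & r1 & H1 & H2 & H3 & Hfam); [intros; apply Haff; lia|].
    destruct (affine_fixes_or_displaces (F J) l1 r1 H2) as (l2 & r2 & G1 & G2 & G3 & HJ).
    { destruct (Haff J (Nat.lt_succ_diag_r J)) as (s & t & Hf).
      exists s, t; intros x Hx; apply Hf; lra. }
    exists l2, r2; repeat split; [lra | lra | lra |].
    intros j Hj; destruct (Nat.eq_dec j J) as [->|Hne]; [exact HJ|].
    apply (fixes_or_displaces_sub _ l1 r1); [lra | lra | apply Hfam; lia].
Qed.

Lemma open_S1_interval l r : 0 <= l -> r <= 1 -> open_S1 (fun x => l < x < r).
Proof.
  intros Hl Hr; split; [intros x Hx; unfold S1; lra|].
  intros x Hx; exists (Rmin (x - l) (r - x)).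
  pose proof (Rmin_l (x - l) (r - x)); pose proof (Rmin_r (x - l) (r - x)).
  split; [apply Rmin_glb_lt; lra|].
  set (e := Rmin (x - l) (r - x)) in *.
  intros y Hy Hd; unfold cdist, S1 in *.
  destruct (Rcase_abs (x - y));
    [rewrite Rabs_left in Hd by lra | rewrite Rabs_right in Hd by lra];
    unfold Rmin in Hd; destruct (Rle_dec _ _) in Hd; split; lra.
Qed.

Lemma weakly_wandering_interval g h m l r : is_inv_S1 g h -> (0 < m)%nat ->
  is_id_S1 (Nat.iter m g) -> 0 <= l -> r <= 1 ->
  (forall j, (j < m)%nat -> fixes_or_displaces (Nat.iter j g) l r) ->
  weakly_wandering g h (fun x => l < x < r).
Proof.
  intros Hinv Hm Hid Hl Hr Hfam n.
  destruct (gpow_iter_order g m (is_inv_S1_S1 g h Hinv) Hm Hid h Hinv n) as (j & Hj & Ej).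
  assert (HS1 : forall x, l < x < r -> S1 x) by (intros; unfold S1; lra).
  destruct (Hfam j Hj) as [Hfix|Hdisp]; [left | right]; intros x Hx.
  - rewrite Ej by auto; apply Hfix, Hx.
  - rewrite Ej by auto; apply Hdisp, Hx.
Qed.

Lemma weakly_wandering_exists g h : in_V g -> is_inv_S1 g h -> finite_order g ->
  exists U, open_S1 U /\ (exists x, U x) /\ weakly_wandering g h U.
Proof.
  intros Hg Hinv (m & Hm & Hid).
  destruct (in_V_iter_affine_pieces g m 0 1 Hg) as (l0 & r0 & H1 & H2 & H3 & Hpieces);
    [lra | lra | lra |].
  destruct (affine_family_fixes_or_displaces (fun j => Nat.iter j g) m l0 r0 H2)
    as (l & r & G1 & G2 & G3 & Hfam).
  { intros j Hj; apply affine_piece_on, Hpieces; lia. }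
  exists (fun x => l < x < r); split; [apply open_S1_interval; lra|].
  split; [exists ((l + r) / 2); lra|].
  apply (weakly_wandering_interval g h m); auto; lra.
Qed.

Lemma cyc_rotate a b c : cyc a b c -> cyc b c a.
Proof. unfold cyc; tauto. Qed.

Lemma cyc_trans x a b c : cyc x a b -> cyc x b c -> cyc x a c.
Proof.
  unfold cyc; intros [[? ?]|[[? ?]|[? ?]]] [[? ?]|[[? ?]|[? ?]]];
    first [ left; split; lra | right; left; split; lra
          | right; right; split; lra | exfalso; lra ].
Qed.

Lemma cyc_irrefl x a : ~ cyc x a a.
Proof. unfold cyc; intros [[? ?]|[[? ?]|[? ?]]]; lra. Qed.

Lemma cyc_total x a b : a <> x -> b <> x -> a <> b -> cyc x a b \/ cyc x b a.
Proof.
  intros H1 H2 H3; unfold cyc.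
  destruct (Rtotal_order x a) as [?|[?|?]], (Rtotal_order x b) as [?|[?|?]],
    (Rtotal_order a b) as [?|[?|?]];
    first [ exfalso; congruence | exfalso; lra
          | left; left; split; lra | left; right; left; split; lra
          | left; right; right; split; lra | right; left; split; lra
          | right; right; left; split; lra | right; right; right; split; lra ].
Qed.

Definition preserves_cyc (f : R -> R) : Prop :=
  forall a b c, S1 a -> S1 b -> S1 c -> cyc a b c -> cyc (f a) (f b) (f c).

Lemma orient_pres_preserves_cyc g : orient_pres g -> preserves_cyc g.
Proof.
  intros Ho a b c Ha Hb Hc [H|[H|H]].
  - apply Ho; auto.
  - apply cyc_rotate, cyc_rotate, Ho; auto.
  - apply cyc_rotate, Ho; auto.
Qed.

Lemma preserves_cyc_iter f : (forall x, S1 x -> S1 (f x)) -> preserves_cyc f ->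
  forall k, preserves_cyc (Nat.iter k f).
Proof.
  intros HS Hc k; induction k as [|k IH]; intros a b c Ha Hb Hc' H; simpl; auto.
  apply Hc; try apply iter_S1; auto.
Qed.

Lemma iter_fixed {A : Type} (f : A -> A) x k : f x = x -> Nat.iter k f x = x.
Proof. intros Hx; induction k as [|k IH]; simpl; [reflexivity | rewrite IH; exact Hx]. Qed.

(* seen from the fixed point x, the orbit of y would advance monotonically *)
Lemma no_cyc_drift f m x y : (forall z, S1 z -> S1 (f z)) -> (0 < m)%nat ->
  is_id_S1 (Nat.iter m f) -> preserves_cyc f -> S1 x -> f x = x -> S1 y ->
  ~ cyc x y (f y).
Proof.
  intros HS Hm Hord Hc Hx Hfx Hy C.
  assert (Hdrift : forall k, cyc x y (Nat.iter (S k) f y)).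
  { induction k as [|k IH]; [exact C|].
    apply (cyc_trans _ _ (Nat.iter (S k) f y)); [exact IH|].
    pose proof (preserves_cyc_iter f HS Hc (S k) x y (f y) Hx Hy (HS y Hy) C) as Hk.
    rewrite iter_fixed, <- Nat.iter_succ_r in Hk by exact Hfx; exact Hk. }
  apply (cyc_irrefl x y).
  specialize (Hdrift (m - 1)%nat); replace (S (m - 1)) with m in Hdrift by lia.
  rewrite Hord in Hdrift by exact Hy; exact Hdrift.
Qed.

Lemma finite_order_fixed_point_id f m x : (forall z, S1 z -> S1 (f z)) ->
  (0 < m)%nat -> is_id_S1 (Nat.iter m f) -> preserves_cyc f -> S1 x -> f x = x ->
  is_id_S1 f.
Proof.
  intros HS Hm Hord Hc Hx Hfx y Hy.
  destruct (Req_EM_T (f y) y) as [E|N]; [exact E | exfalso].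
  assert (Hyx : y <> x) by (intros ->; exact (N Hfx)).
  assert (Hfyx : f y <> x).
  { intros E; apply Hyx.
    rewrite <- (iter_pred_order f m Hm Hord y Hy), E; apply iter_fixed, Hfx. }
  destruct (cyc_total x y (f y) Hyx Hfyx (not_eq_sym N)) as [C|C].
  - exact (no_cyc_drift f m x y HS Hm Hord Hc Hx Hfx Hy C).
  - (* the inverse f^(m-1) has the same properties and moves f y back to y *)
    apply (no_cyc_drift (Nat.iter (m - 1) f) m x (f y)); auto.
    + intros; apply iter_S1; auto.
    + apply iter_iter_order; auto.
    + apply preserves_cyc_iter; auto.
    + apply iter_fixed, Hfx.
    + rewrite iter_pred_order; auto.
Qed.

Lemma in_T_weakly_wandering_wandering g h U : in_T g -> is_inv_S1 g h ->
  finite_order g -> (forall x, U x -> S1 x) ->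
  weakly_wandering g h U -> wandering g h U.
Proof.
  intros (_ & _ & _ & Hor) Hinv (m & Hm & Hid) HU Hw n Hn.
  destruct (Hw n) as [Hfix|Hdisj]; [|exact Hdisj].
  intros x Hx _; apply Hn.
  pose proof (is_inv_S1_S1 g h Hinv) as HS.
  destruct (gpow_iter_order g m HS Hm Hid h Hinv n) as (j & _ & Ej).
  assert (Hj : is_id_S1 (Nat.iter j g)).
  { apply (finite_order_fixed_point_id _ m x); auto.
    - intros; apply iter_S1; auto.
    - apply iter_iter_order; auto.
    - apply preserves_cyc_iter, orient_pres_preserves_cyc; auto.
    - rewrite <- Ej; auto. }
  intros y Hy; rewrite Ej by exact Hy; apply Hj, Hy.
Qed.

Theorem lemma4p3 (g h : R -> R) :
  in_V g -> is_inv_S1 g h -> finite_order g ->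
  (exists U : R -> Prop, open_S1 U /\ (exists x, U x) /\ weakly_wandering g h U) /\
  (in_T g ->
     (exists U : R -> Prop, open_S1 U /\ (exists x, U x) /\ wandering g h U) /\
     (forall U : R -> Prop, (forall x, U x -> S1 x) ->
        weakly_wandering g h U -> wandering g h U)).
Proof.
  intros Hg Hinv Hord.
  split; [exact (weakly_wandering_exists g h Hg Hinv Hord)|].
  intros HT.
  assert (Hup : forall U, (forall x, U x -> S1 x) ->
            weakly_wandering g h U -> wandering g h U)
    by (intros U; apply (in_T_weakly_wandering_wandering g h U HT Hinv Hord)).
  split; [|exact Hup].
  destruct (weakly_wandering_exists g h Hg Hinv Hord) as (U & HUo & HUx & HUw).
  exists U; split; [exact HUo|]; split; [exact HUx|].
  apply Hup; [apply HUo | exact HUw].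
Qed.
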